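(* Let $G$ be a finite simple graph, let $V_1\subset V(G)$ and $V_2=V(G)\setminus V_1$ with both nonempty, and let $G_1=G(V_1)$, $G_2=G(V_2)$, $V=V(G)$. Let $k$ be a positive integer and assume: (i) $\deg_G(x)\ge k$ for all $x\in V(G)$; (ii) $G_2$ is $k$-edge-connected; (iii) $\max_{x,y\in V}\delta(x,y)\le 2$. If at least one of the following holds: (a) $\Phi\ge k$; (b) $|\partial^1 V_1|\ge k$; (c) $V_1=\partial^1 V_1$; then $G$ is $k$-edge-connected.
   Context: For $A,B\subset V(G)$, $[A,B]$ denotes the set of edges $ab$ of $G$ with $a\in A$, $b\in B$; $[v,A]$ means $[\{v\},A]$. $\deg_G(v)=|[v,V(G)]|$. $G(A)$ is the induced subgraph on $A$. $d_G$ is graph distance and $d_G(v,A)=\min_{w\in A}d_G(v,w)$. A graph is $k$-edge-connected if every edge cut $[S,\bar S]$ ($\emptyset\ne S\subsetneq V$, $\bar S=V\setminus S$) has at least $k$ edges. Contracted distance: for $x,y\in V_1$, $\delta(x,y)=\min\{d_{G_1}(x,y),\, d_G(x,V_2)+d_G(y,V_2)\}$; for $x\in V$ and $y\in V_2$, $\delta(x,y)=\delta(y,x)=d_G(x,V_2)$. For $j\ge1$: $\partial^j V_1=\{x\in V_1: |[x,V_2]|\ge j\}$ and $i^j V_1=\{x\in V_1: |[x,V_2]|<j\}$. $\Phi=\sum_{x\in V_1}\min\{\max\{1,|[x,i^2V_1]|\},\,|[x,V_2]|\}$. *)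

(* A finite simple graph is a symmetric irreflexive
   relation e on a finType T (vertex set = all of T). *)
From mathcomp Require Import all_boot.
Set Implicit Arguments. Unset Strict Implicit. Unset Printing Implicit Defensive.

Section Graph.
Variables (T : finType) (e : rel T).

Definition simple_graph : Prop := irreflexive e /\ symmetric e.

(* |[A,B]| : number of edges ab with a in A, b in B (each edge is an
   ordered pair (a,b) with a \in A, b \in B; for disjoint A, B this counts
   each edge exactly once). *)
Definition ecount (A B : {set T}) : nat :=
  #|[set p : T * T | (p.1 \in A) && (p.2 \in B) && e p.1 p.2]|.

Definition vcount (v : T) (A : {set T}) : nat := ecount [set v] A.

Definition deg (v : T) : nat := vcount v [set: T].

(* The induced subgraph G(W) is k-edge-connected: every edge cut
   [S, W \ S] with S nonempty, proper in W, has at least k edges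
   (edges of G(W) between S and W\S are exactly the edges of G
   between them). *)
Definition kedge_conn_on (k : nat) (W : {set T}) : Prop :=
  forall S : {set T}, S \subset W -> S != set0 -> S != W ->
    k <= ecount S (W :\: S).

(* Walks in the induced subgraph G(W): within W x y n  <->  there is a
   walk of length at most n from x to y using only vertices of W,
   i.e.  d_{G(W)}(x,y) <= n  (for x, y in W). *)
Fixpoint within (W : {set T}) (n : nat) (x y : T) : bool :=
  match n with
  | 0 => (x == y) && (x \in W)
  | n'.+1 => within W n' x y ||
             [exists z, within W n' x z && (y \in W) && e z y]
  end.

Definition dist_le (W : {set T}) (x y : T) (n : nat) : bool := within W n x y.

Definition setdist_le (x : T) (A : {set T}) (n : nat) : bool :=
  [exists w in A, dist_le [set: T] x w n].

(* Contracted distance bounds, with V2 = ~: V1: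
   for x,y in V1: delta(x,y) = min{ d_{G1}(x,y), d_G(x,V2)+d_G(y,V2) } <= n;
   for x in V, y in V2: delta(x,y) = d_G(x,V2) <= n. *)
Definition delta_le (V1 : {set T}) (x y : T) (n : nat) : Prop :=
  if (x \in V1) && (y \in V1) then
    dist_le V1 x y n \/
    exists a b, a + b <= n /\ setdist_le x (~: V1) a /\ setdist_le y (~: V1) b
  else if y \in ~: V1 then setdist_le x (~: V1) n
  else setdist_le y (~: V1) n.

Definition bdry (V1 : {set T}) (j : nat) : {set T} :=
  [set x in V1 | j <= vcount x (~: V1)].
Definition inter (V1 : {set T}) (j : nat) : {set T} :=
  [set x in V1 | vcount x (~: V1) < j].

Definition Phi (V1 : {set T}) : nat :=
  \sum_(x in V1) minn (maxn 1 (vcount x (inter V1 2))) (vcount x (~: V1)).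

End Graph.

From mathcomp Require Import all_boot zify.
Set Implicit Arguments. Unset Strict Implicit. Unset Printing Implicit Defensive.

(* If S meets V2 = ~V1 in a nonempty proper part of V2,
   the k-edge-connectivity of G2 already gives k edges of the cut.
   Otherwise S, or its complement, lies inside V1, and everything
   reduces to the key lemma [cut_inside_V1]: a nonempty S included in V1
   has at least k outgoing edges.  For it we distinguish two cases.
   - Every x in S has a neighbour outside S: then a minimum-degree count
     ([cut_min_degree]) yields k edges, whatever S is.
   - Some x0 in S has all its neighbours in S.  Since delta(x0, .) <= 2,
     S sends an edge to V2 ([closed_reaches_V2]) and every vertex of
     V1 \ S has a neighbour in S ([closed_dominates]).  The cut is
     [S, V2] + [V1 \ S, S] ([cut_decomposition]), and each of the
     hypotheses (a), (b), (c) bounds this sum from below by k. *)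

Section Neighbours.
Variables (T : finType) (e : rel T).

Definition nb (x : T) (B : {set T}) : nat := \sum_(y in B) (e x y : nat).

Lemma ecount_sum (A B : {set T}) : ecount e A B = \sum_(x in A) nb x B.
Proof.
rewrite /ecount -sum1_card /nb.
rewrite (pair_big_dep (mem A) (fun _ => mem B) (fun x y => (e x y : nat))) /=.
rewrite big_mkcond [RHS]big_mkcond /=; apply: eq_bigr => p _; rewrite inE.
by case: (p.1 \in A); case: (p.2 \in B); case: (e p.1 p.2).
Qed.

Lemma vcount_nb (x : T) (B : {set T}) : vcount e x B = nb x B.
Proof. by rewrite /vcount ecount_sum big_set1. Qed.

Lemma nbU (x : T) (B C : {set T}) :
  [disjoint B & C] -> nb x (B :|: C) = nb x B + nb x C.
Proof. by move=> dBC; rewrite /nb -bigU //=; apply: eq_bigl => y; rewrite !inE. Qed.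

Lemma nb_gt0 (x y : T) (B : {set T}) : y \in B -> e x y -> 0 < nb x B.
Proof. by move=> yB exy; rewrite /nb (bigD1 y) //= exy. Qed.

Lemma nb_subset (x : T) (B C : {set T}) : B \subset C -> nb x B <= nb x C.
Proof.
by move=> sBC; rewrite /nb [X in _ <= X](big_setID B) (setIidPr sBC) leq_addr.
Qed.

Lemma deg_split (x : T) (S : {set T}) : deg e x = nb x S + nb x (~: S).
Proof. by rewrite /deg vcount_nb -nbU ?setUCr // disjoints_subset setCK. Qed.

Lemma nb_lt_card (x : T) (S : {set T}) :
  irreflexive e -> x \in S -> nb x S < #|S|.
Proof.
move=> irr xS; rewrite /nb -sum1_card !(bigD1 x xS) /= irr add0n ltnS.
by apply: leq_sum => y _; apply: leq_b1.
Qed.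

Lemma ecount_sym (A B : {set T}) : symmetric e -> ecount e A B = ecount e B A.
Proof.
move=> sym; rewrite !ecount_sum /nb exchange_big /=.
by apply: eq_bigr => y _; apply: eq_bigr => x _; rewrite sym.
Qed.

Lemma ecount_subset (A A' B B' : {set T}) :
  A \subset A' -> B \subset B' -> ecount e A B <= ecount e A' B'.
Proof.
move=> sA sB; rewrite !ecount_sum [X in _ <= X](big_setID A) (setIidPr sA).
by apply: leq_trans (leq_addr _ _); apply: leq_sum => x _; apply: nb_subset.
Qed.

Lemma within0 (W : {set T}) (x y : T) : within e W 0 x y -> x = y.
Proof. by move=> /andP[/eqP]. Qed.

Lemma within_le1 (W : {set T}) (n : nat) (x y : T) :
  n <= 1 -> within e W n x y -> x = y \/ e x y.
Proof.
case: n => [_ /within0 -> | [_ | //]]; first by left.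
by move=> /orP[/within0 ->| /existsP[z /andP[/andP[/andP[/eqP -> _] _] ezy]]];
  [left | right].
Qed.

Lemma within2 (W : {set T}) (x y : T) :
  within e W 2 x y -> [\/ x = y, e x y | exists z, e x z /\ e z y].
Proof.
move=> /orP[/(within_le1 (leqnn 1)) [-> | exy] | ].
- by constructor 1.
- by constructor 2.
move=> /existsP[z /andP[/andP[/(within_le1 (leqnn 1)) [<- | exz] _] ezy]].
  by constructor 2.
by constructor 3; exists z.
Qed.

End Neighbours.

(* For |S| >= k this is immediate;
   otherwise each x in S has at least k - (|S| - 1) neighbours outside S,
   and |S| (k + 1 - |S|) >= k when 0 < |S| < k. *)
Lemma cut_min_degree (T : finType) (e : rel T) (S : {set T}) (k : nat) :
  irreflexive e -> S != set0 -> (forall x, k <= deg e x) ->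
  (forall x, x \in S -> 0 < nb e x (~: S)) ->
  k <= \sum_(x in S) nb e x (~: S).
Proof.
move=> irr /set0Pn[x0 x0S] hdeg hout.
have S_gt0 : 0 < #|S| by apply/card_gt0P; exists x0.
have [k_le_S | S_lt_k] := leqP k #|S|.
  by apply: leq_trans k_le_S _; rewrite -sum1_card; apply: leq_sum.
have out_ge x : x \in S -> k + 1 - #|S| <= nb e x (~: S).
  move=> xS; have := hdeg x; rewrite (deg_split e x S).
  have := nb_lt_card irr xS; lia.
apply: (@leq_trans (#|S| * (k + 1 - #|S|))); first by nia.
by rewrite -sum_nat_const; apply: leq_sum.
Qed.

Section ClosedVertex.
Variables (T : finType) (e : rel T) (V1 S : {set T}) (x0 : T).
Hypothesis sym : symmetric e.
Hypothesis delta2 : forall x y : T, delta_le e V1 x y 2.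
Hypothesis sSV1 : S \subset V1.
Hypothesis x0S : x0 \in S.
Hypothesis closed : forall y, e x0 y -> y \in S.

Let x0V1 : x0 \in V1. Proof. exact: subsetP sSV1 _ x0S. Qed.

Lemma closed_far_from_V2 (w : T) : w \in ~: V1 -> ~ (x0 = w \/ e x0 w).
Proof.
rewrite inE => wV2 [x0w | ex0w]; first by rewrite -x0w x0V1 in wV2.
by rewrite (subsetP sSV1 _ (closed ex0w)) in wV2.
Qed.

(* delta(x0, w) <= 2 for w in V2 forces a neighbour of x0 (inside S)
   to be adjacent to V2. *)
Lemma closed_reaches_V2 : ~: V1 != set0 -> 0 < \sum_(x in S) nb e x (~: V1).
Proof.
case/set0Pn=> w; rewrite inE => /negbTE wV1.
have := delta2 x0 w; rewrite /delta_le x0V1 wV1 inE wV1 /=.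
case/existsP=> w' /andP[w'V2 /within2[x0w' | ex0w' | [z [ex0z ezw']]]].
- by case: (closed_far_from_V2 w'V2); left.
- by case: (closed_far_from_V2 w'V2); right.
rewrite (bigD1 z (closed ex0z)) /=; apply: leq_trans (leq_addr _ _).
exact: nb_gt0 w'V2 ezw'.
Qed.

(* delta(x0, t) <= 2 for t in V1 \ S: a short walk inside G1 passes
   through a neighbour of x0, while the detour through V2 is too long
   because x0 is far from V2. *)
Lemma closed_dominates (t : T) : t \in V1 :\: S -> 0 < nb e t S.
Proof.
rewrite inE => /andP[tS tV1]; have := delta2 x0 t; rewrite /delta_le x0V1 tV1 /=.
case=> [/within2[x0t | ex0t | [z [ex0z ezt]]] | [a [b [ab2 [ha hb]]]]].
- by rewrite -x0t x0S in tS.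
- by rewrite closed in tS.
- by apply: nb_gt0 (closed ex0z) _; rewrite sym.
have [a_le1 | a_gt1] := leqP a 1.
  case/existsP: ha => w /andP[wV2 /(within_le1 a_le1) x0w].
  by case: (closed_far_from_V2 wV2).
have b0 : b = 0 by lia.
case/existsP: hb => w /andP[wV2]; rewrite b0 /dist_le => /within0 tw.
by rewrite inE -tw tV1 in wV2.
Qed.

End ClosedVertex.

Lemma compl_sub (T : finType) (V1 S : {set T}) :
  S \subset V1 -> ~: S = ~: V1 :|: (V1 :\: S) /\ [disjoint ~: V1 & V1 :\: S].
Proof.
move=> sSV1; split; last first.
  rewrite disjoints_subset; apply/subsetP => y.
  by rewrite !inE => /negbTE ->; rewrite andbF.
apply/setP => y; rewrite !inE; case: (boolP (y \in S)) => yS /=.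
  by rewrite (subsetP sSV1 _ yS).
by case: (y \in V1).
Qed.

Lemma cut_decomposition (T : finType) (e : rel T) (V1 S : {set T}) :
  symmetric e -> S \subset V1 ->
  \sum_(x in S) nb e x (~: S) =
  \sum_(x in S) nb e x (~: V1) + \sum_(t in V1 :\: S) nb e t S.
Proof.
move=> sym /compl_sub[compl disj].
rewrite -!ecount_sum (ecount_sym (V1 :\: S) S sym) !ecount_sum -big_split /=.
by apply: eq_bigr => x _; rewrite compl nbU.
Qed.

(* Hypothesis (b): a vertex of the boundary is either in S, where it
   contributes to [S, V2], or in V1 \ S, where it has a neighbour in S. *)
Lemma boundary_bound (T : finType) (e : rel T) (V1 S : {set T}) :
  S \subset V1 -> (forall t, t \in V1 :\: S -> 0 < nb e t S) ->
  #|bdry e V1 1| <= \sum_(x in S) nb e x (~: V1) + \sum_(t in V1 :\: S) nb e t S.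
Proof.
move=> sSV1 dom.
have -> : #|bdry e V1 1| = \sum_(x in V1) (0 < nb e x (~: V1) : nat).
  rewrite -sum1_card big_mkcond [RHS]big_mkcond; apply: eq_bigr => x _.
  by rewrite inE vcount_nb; case: (x \in V1); case: nb.
rewrite (big_setID S) (setIidPr sSV1); apply: leq_add; apply: leq_sum => x.
  by case: nb.
by move=> /dom pos; apply: leq_trans (leq_b1 _) pos.
Qed.

(* Hypothesis (a), first case: a vertex b of V1 \ S with at most one
   neighbour in V2 has at least k - |V1 \ S| neighbours in S, so the
   cut has at least k edges. *)
Lemma low_vertex_bound (T : finType) (e : rel T) (V1 S : {set T}) (b : T) (k : nat) :
  irreflexive e -> S \subset V1 -> (forall x, k <= deg e x) ->
  (forall t, t \in V1 :\: S -> 0 < nb e t S) ->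
  0 < \sum_(x in S) nb e x (~: V1) ->
  b \in V1 :\: S -> b \in inter e V1 2 ->
  k <= \sum_(x in S) nb e x (~: V1) + \sum_(t in V1 :\: S) nb e t S.
Proof.
move=> irr sSV1 hdeg dom toV2 bT; rewrite inE vcount_nb => /andP[_ b_low].
have others : nb e b S + #|V1 :\: S| <= \sum_(t in V1 :\: S) nb e t S + 1.
  rewrite -sum1_card !(bigD1 b bT) /= [1 + _]addnC addnA leq_add2r leq_add2l.
  by apply: leq_sum => t /andP[tT _]; apply: dom.
have outside : nb e b (~: S) = nb e b (~: V1) + nb e b (V1 :\: S).
  by case: (compl_sub sSV1) => -> disj; rewrite nbU.
have := nb_lt_card (e := e) irr bT.
have := hdeg b; rewrite (deg_split e b S) outside; lia.
Qed.

(* Hypothesis (a), second case: when i^2 V1 lies inside S, each term of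
   Phi is bounded by the matching term of [S, V2] (for x in S) or of
   [V1 \ S, S] (for t in V1 \ S, using max(1, |[t, i^2 V1]|) <= |[t, S]|). *)
Lemma phi_bound (T : finType) (e : rel T) (V1 S : {set T}) :
  S \subset V1 -> (forall t, t \in V1 :\: S -> 0 < nb e t S) ->
  inter e V1 2 \subset S ->
  Phi e V1 <= \sum_(x in S) nb e x (~: V1) + \sum_(t in V1 :\: S) nb e t S.
Proof.
move=> sSV1 dom sIS; rewrite /Phi (big_setID S) (setIidPr sSV1).
apply: leq_add; apply: leq_sum => x.
  by move=> _; rewrite !vcount_nb geq_minr.
move=> xT; apply: leq_trans (geq_minl _ _) _.
by rewrite geq_max dom //= !vcount_nb nb_subset.
Qed.

Lemma cut_inside_V1 (T : finType) (e : rel T) (V1 S : {set T}) (k : nat) :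
  simple_graph e -> ~: V1 != set0 ->
  (forall x : T, k <= deg e x) ->
  (forall x y : T, delta_le e V1 x y 2) ->
  (k <= Phi e V1 \/ k <= #|bdry e V1 1| \/ V1 = bdry e V1 1) ->
  S \subset V1 -> S != set0 -> k <= ecount e S (~: S).
Proof.
move=> [irr sym] V2n0 hdeg delta2 hyp sSV1 Sn0; rewrite ecount_sum.
have [/forall_inP all_out | /forall_inPn[x0 x0S x0_in]] :=
  boolP [forall x in S, 0 < nb e x (~: S)].
  exact: cut_min_degree.
have closed y : e x0 y -> y \in S.
  by move=> ex0y; apply: contraNT x0_in => yS; apply: nb_gt0 ex0y; rewrite inE.
have toV2 := closed_reaches_V2 delta2 sSV1 x0S closed V2n0.
have dom := closed_dominates sym delta2 sSV1 x0S closed.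
rewrite (cut_decomposition sym sSV1).
case: hyp => [phi_k | [bdry_k | V1_bdry]].
- case: (boolP (inter e V1 2 \subset S)) => [sIS | /subsetPn[b bI bS]].
    exact: leq_trans phi_k (phi_bound sSV1 dom sIS).
  have bT : b \in V1 :\: S by move: bI; rewrite !inE bS => /andP[->].
  exact: low_vertex_bound irr sSV1 hdeg dom toV2 bT bI.
- exact: leq_trans bdry_k (boundary_bound sSV1 dom).
- (* under (c) x0 itself has a neighbour in V2, contradicting closedness *)
  have := subsetP sSV1 _ x0S; rewrite {1}V1_bdry inE vcount_nb => /andP[_].
  case: (compl_sub sSV1) x0_in => -> disj; rewrite nbU // -lt0n.
  by case: nb.
Qed.

Theorem corollary1 (T : finType) (e : rel T) (V1 : {set T}) (k : nat) :
  simple_graph e ->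
  V1 != set0 -> ~: V1 != set0 ->
  0 < k ->
  (forall x : T, k <= deg e x) ->
  kedge_conn_on e k (~: V1) ->
  (forall x y : T, delta_le e V1 x y 2) ->
  (k <= Phi e V1 \/ k <= #|bdry e V1 1| \/ V1 = bdry e V1 1) ->
  kedge_conn_on e k [set: T].
Proof.
move=> sg _ V2n0 _ hdeg hG2 delta2 hyp S _ Sn0 SnT; rewrite setTD.
have inside := cut_inside_V1 sg V2n0 hdeg delta2 hyp.
have [SV2_0 | SV2_n0] := eqVneq (S :&: ~: V1) set0.
  by apply: inside => //; rewrite -setD_eq0 setDE SV2_0.
(* S contains V2: the complement of S lies in V1 *)
have [sV2S | nsV2S] := boolP (~: V1 \subset S).
  rewrite ecount_sym; last by case: sg.
  rewrite -{2}(setCK S); apply: inside; first by rewrite -(setCK V1) setCS.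
  by apply: contra SnT => /eqP CS0; rewrite -(setCK S) CS0 setC0.
apply: leq_trans (hG2 _ (subsetIr _ _) SV2_n0 _) _.
  by apply: contra nsV2S => /eqP <-; rewrite subsetIl.
apply: ecount_subset; first exact: subsetIl.
by apply/subsetP => x; rewrite !inE; case: (x \in S); case: (x \in V1).
Qed.
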